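(* Let $p$ be a prime, and let $m$ and $n$ be integers with $n \geq 1$ and $n+2 \leq m \leq (p-1)/2$. Let $\lambda = (\lambda_1, \ldots, \lambda_m)$ be a sequence of integers with $p \geq \lambda_1 \geq \cdots \geq \lambda_m > 0$ and $\sum_{k=1}^m \lambda_k \geq np + 1$. Let $\mu = (\mu_1, \ldots, \mu_{2m - 1})$ be a sequence of integers such that $\mu_{i + j - 1} \geq \min\{\lambda_i + \lambda_j - 1, p\}$ for all $1 \leq i, j \leq m$. Then \[\sum_{k = 1}^{2m-1} \mu_k \geq (2n + 1)p.\] *)

From Stdlib Require Import ZArith Znumtheory List.
Open Scope Z_scope.

Definition zsum1 (N : nat) (f : nat -> Z) : Z :=
  fold_right Z.add 0 (map f (seq 1 N)).

(** If [2 lam_1 <= p], no truncation at [p] occurs, so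
    [mu_(i+j-1) >= lam_i + lam_j - 1] for all [i, j]; averaging the hook
    bound (first row and last column) with the zigzag bound (the pairs
    [(i, i)] and [(i, i+1)]) gives [m * sum mu >= (2m - 1)(2 sum lam - m)],
    which suffices since [p >= 2m + 1].  Otherwise [mu_1 >= p].  If moreover
    [lam_1 + lam_2 <= p], the first row and the last column alone suffice.
    If [lam_1 + lam_2 > p], then [mu_1, mu_2 >= p] and dropping [lam_1],
    [mu_1], [mu_2] reduces [n] by one; the base case [n = 1] again follows
    from the first row and last column. *)

From Stdlib Require Import ZArith Znumtheory List Lia.
Open Scope Z_scope.

Lemma zsum1_0 (f : nat -> Z) : zsum1 0 f = 0.
Proof. reflexivity. Qed.

Lemma zsum1_S (N : nat) (f : nat -> Z) :
  zsum1 (S N) f = f 1%nat + zsum1 N (fun k => f (S k)).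
Proof.
  unfold zsum1. change (seq 1 (S N)) with (1%nat :: seq 2 N).
  rewrite <- seq_shift. cbn [map fold_right]. rewrite map_map. reflexivity.
Qed.

Lemma zsum1_add (a b : nat) (f : nat -> Z) :
  zsum1 (a + b) f = zsum1 a f + zsum1 b (fun k => f (a + k)%nat).
Proof.
  revert f; induction a as [|a IH]; intro f.
  - reflexivity.
  - simpl (S a + b)%nat. rewrite !zsum1_S, IH. simpl. ring.
Qed.

Lemma zsum1_ge_const_add (N : nat) (c : Z) (f g : nat -> Z) :
  (forall k, (1 <= k <= N)%nat -> c + g k <= f k) ->
  Z.of_nat N * c + zsum1 N g <= zsum1 N f.
Proof.
  revert f g; induction N as [|N IH]; intros f g H.
  - reflexivity.
  - rewrite !zsum1_S.
    assert (Z.of_nat N * c + zsum1 N (fun k => g (S k)) <= zsum1 N (fun k => f (S k)))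
      by (apply IH; intros k Hk; apply H; lia).
    specialize (H 1%nat ltac:(lia)). lia.
Qed.

Lemma zsum1_le (N : nat) (f g : nat -> Z) :
  (forall k, (1 <= k <= N)%nat -> g k <= f k) -> zsum1 N g <= zsum1 N f.
Proof.
  intro H. pose proof (zsum1_ge_const_add N 0 f g ltac:(intros k Hk; specialize (H k Hk); lia)).
  lia.
Qed.

Lemma zsum1_const (N : nat) (c : Z) : zsum1 N (fun _ => c) = Z.of_nat N * c.
Proof.
  induction N as [|N IH].
  - reflexivity.
  - rewrite zsum1_S, IH. lia.
Qed.

Lemma zsum1_split_half (N : nat) (f : nat -> Z) :
  (1 <= N)%nat -> zsum1 (2 * N - 1) f = zsum1 N f + zsum1 (N - 1) (fun k => f (N + k)%nat).
Proof.
  intro HN. replace (2 * N - 1)%nat with (N + (N - 1))%nat by lia. apply zsum1_add.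
Qed.

Definition pairwise_sum_bound (M : nat) (lam mu : nat -> Z) : Prop :=
  forall i j, (1 <= i <= M)%nat -> (1 <= j <= M)%nat ->
    lam i + lam j - 1 <= mu (i + j - 1)%nat.

Lemma hook_bound (M : nat) (lam mu : nat -> Z) :
  (1 <= M)%nat -> pairwise_sum_bound M lam mu ->
  2 * zsum1 M lam - 1 + (Z.of_nat M - 1) * (lam 1%nat + lam M - 2)
    <= zsum1 (2 * M - 1) mu.
Proof.
  intros HM Hmu. rewrite zsum1_split_half by exact HM.
  destruct M as [|M']; [lia|]. replace (S M' - 1)%nat with M' by lia.
  assert (row : Z.of_nat (S M') * (lam 1%nat - 1) + zsum1 (S M') lam <= zsum1 (S M') mu).
  { apply zsum1_ge_const_add. intros k Hk.
    specialize (Hmu 1%nat k ltac:(lia) Hk). replace (1 + k - 1)%nat with k in Hmu by lia.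
    lia. }
  assert (column : Z.of_nat M' * (lam (S M') - 1) + zsum1 M' (fun k => lam (S k))
                   <= zsum1 M' (fun k => mu (S M' + k)%nat)).
  { apply zsum1_ge_const_add. intros k Hk.
    specialize (Hmu (S k) (S M') ltac:(lia) ltac:(lia)).
    replace (S k + S M' - 1)%nat with (S M' + k)%nat in Hmu by lia. lia. }
  pose proof (zsum1_S M' lam). rewrite Nat2Z.inj_succ in *. nia.
Qed.

Lemma zigzag_bound (M : nat) (lam mu : nat -> Z) :
  (1 <= M)%nat -> pairwise_sum_bound M lam mu ->
  4 * zsum1 M lam - lam 1%nat - lam M - 2 * Z.of_nat M + 1 <= zsum1 (2 * M - 1) mu.
Proof.
  revert lam mu; induction M as [|M IH]; intros lam mu HM Hmu; [lia|].
  assert (diag : lam 1%nat + lam 1%nat - 1 <= mu 1%nat)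
    by exact (Hmu 1%nat 1%nat ltac:(lia) ltac:(lia)).
  destruct M as [|M].
  - change (2 * 1 - 1)%nat with 1%nat. rewrite !zsum1_S, !zsum1_0. lia.
  - assert (next : lam 1%nat + lam 2%nat - 1 <= mu 2%nat)
      by exact (Hmu 1%nat 2%nat ltac:(lia) ltac:(lia)).
    assert (tail := IH (fun k => lam (S k)) (fun k => mu (S (S k))) ltac:(lia)).
    cbv beta in tail.
    specialize (tail ltac:(intros i j Hi Hj;
      replace (S (S (i + j - 1))) with (S i + S j - 1)%nat by lia; apply Hmu; lia)).
    replace (2 * S (S M) - 1)%nat with (S (S (2 * S M - 1))) by lia.
    rewrite (zsum1_S (S M) lam), (zsum1_S _ mu), (zsum1_S _ (fun k => mu (S k))). lia.
Qed.

(** Weighting the zigzag bound by [M - 1] cancels [lam 1 + lam M] against the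
    hook bound. *)
Lemma untruncated_sum_bound (M : nat) (lam mu : nat -> Z) :
  (1 <= M)%nat -> pairwise_sum_bound M lam mu ->
  (2 * Z.of_nat M - 1) * (2 * zsum1 M lam - Z.of_nat M)
    <= Z.of_nat M * zsum1 (2 * M - 1) mu.
Proof.
  intros HM Hmu.
  pose proof (hook_bound M lam mu HM Hmu) as hook.
  pose proof (zigzag_bound M lam mu HM Hmu) as zigzag.
  assert (weighted : (Z.of_nat M - 1) *
            (4 * zsum1 M lam - lam 1%nat - lam M - 2 * Z.of_nat M + 1)
          <= (Z.of_nat M - 1) * zsum1 (2 * M - 1) mu)
    by (apply Z.mul_le_mono_nonneg_l; lia).
  lia.
Qed.

Lemma averaged_bound_suffices (p N M S X : Z) :
  1 <= N -> N + 2 <= M -> 2 * M + 1 <= p -> N * p + 1 <= S ->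
  (2 * M - 1) * (2 * S - M) <= M * X -> (2 * N + 1) * p <= X.
Proof.
  intros HN HM Hp HS HX.
  assert (excess : M - 2 <= 2 * M * N - 2 * N - M) by nia.
  assert (M * ((2 * N + 1) * p) <= (2 * M - 1) * (2 * S - M)) by nia.
  nia.
Qed.

Section Truncated.

Variables (p : Z) (m : nat) (lam mu : nat -> Z).
Hypothesis m_pos : (1 <= m)%nat.
Hypothesis lam_antitone : forall k, (1 <= k < m)%nat -> lam (S k) <= lam k.
Hypothesis lam_1_le : lam 1%nat <= p.
Hypothesis lam_m_pos : 0 < lam m.
Hypothesis mu_ge : forall i j, (1 <= i <= m)%nat -> (1 <= j <= m)%nat ->
  Z.min (lam i + lam j - 1) p <= mu (i + j - 1)%nat.

Lemma lam_antitone_le (i j : nat) : (1 <= i <= j)%nat -> (j <= m)%nat -> lam j <= lam i.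
Proof.
  intros Hij Hj. replace j with (i + (j - i))%nat by lia.
  assert (Hd : (i + (j - i) <= m)%nat) by lia. revert Hd.
  induction (j - i)%nat as [|d IH]; intro Hd.
  - rewrite Nat.add_0_r. lia.
  - replace (i + S d)%nat with (S (i + d)) by lia.
    specialize (lam_antitone (i + d)%nat ltac:(lia)). specialize (IH ltac:(lia)). lia.
Qed.

Lemma lam_range (k : nat) : (1 <= k <= m)%nat -> 0 < lam k <= p.
Proof.
  intro Hk. pose proof (lam_antitone_le 1 k ltac:(lia) ltac:(lia)).
  pose proof (lam_antitone_le k m ltac:(lia) ltac:(lia)). lia.
Qed.

Lemma last_column_bound :
  zsum1 m lam - lam 1%nat <= zsum1 (m - 1) (fun k => mu (m + k)%nat).
Proof.
  assert (entry : forall k, (1 <= k <= m - 1)%nat -> lam (S k) <= mu (m + k)%nat).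
  { intros k Hk. specialize (mu_ge (S k) m ltac:(lia) ltac:(lia)).
    replace (S k + m - 1)%nat with (m + k)%nat in mu_ge by lia.
    pose proof (lam_range (S k) ltac:(lia)). pose proof (lam_range m ltac:(lia)). lia. }
  apply zsum1_le in entry.
  destruct m as [|m']; [lia|]. replace (S m' - 1)%nat with m' in * by lia.
  rewrite zsum1_S. lia.
Qed.

Lemma mu_1_saturated : p < 2 * lam 1%nat -> p <= mu 1%nat.
Proof. intro H. specialize (mu_ge 1 1 ltac:(lia) ltac:(lia)). cbn in mu_ge. lia. Qed.

Lemma mu_2_saturated : (2 <= m)%nat -> p < lam 1%nat + lam 2%nat -> p <= mu 2%nat.
Proof. intros Hm H. specialize (mu_ge 1 2 ltac:(lia) ltac:(lia)). cbn in mu_ge. lia. Qed.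

Lemma bound_unsaturated (n : nat) :
  (1 <= n)%nat -> (n + 2 <= m)%nat -> 2 * Z.of_nat m + 1 <= p ->
  Z.of_nat n * p + 1 <= zsum1 m lam -> 2 * lam 1%nat <= p ->
  (2 * Z.of_nat n + 1) * p <= zsum1 (2 * m - 1) mu.
Proof.
  intros Hn Hm Hp Hsum Hlam1.
  apply (averaged_bound_suffices p (Z.of_nat n) (Z.of_nat m) (zsum1 m lam)); try lia.
  apply untruncated_sum_bound; [exact m_pos|].
  intros i j Hi Hj. specialize (mu_ge i j Hi Hj).
  pose proof (lam_antitone_le 1 i ltac:(lia) ltac:(lia)).
  pose proof (lam_antitone_le 1 j ltac:(lia) ltac:(lia)). lia.
Qed.

Lemma bound_first_row_unsaturated (n : nat) :
  (3 <= m)%nat -> Z.of_nat n * p + 1 <= zsum1 m lam ->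
  p < 2 * lam 1%nat -> lam 1%nat + lam 2%nat <= p ->
  (2 * Z.of_nat n + 1) * p <= zsum1 (2 * m - 1) mu.
Proof.
  intros Hm Hsum Hlam1 Hlam12.
  rewrite zsum1_split_half by exact m_pos.
  pose proof last_column_bound as column.
  pose proof (mu_1_saturated Hlam1) as mu_1.
  pose proof (lam_range 1 ltac:(lia)).
  assert (entry : forall k, (1 <= k <= m - 1)%nat -> lam 1%nat - 1 + lam (S k) <= mu (S k)).
  { intros k Hk. specialize (mu_ge 1 (S k) ltac:(lia) ltac:(lia)).
    replace (1 + S k - 1)%nat with (S k) in mu_ge by lia.
    pose proof (lam_antitone_le 2 (S k) ltac:(lia) ltac:(lia)). lia. }
  apply zsum1_ge_const_add in entry.
  destruct m as [|m']; [lia|]. replace (S m' - 1)%nat with m' in * by lia.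
  rewrite (zsum1_S m' mu). pose proof (zsum1_S m' lam).
  assert (2 * (lam 1%nat - 1) <= Z.of_nat m' * (lam 1%nat - 1)) by nia.
  lia.
Qed.

Lemma bound_first_two_saturated :
  (3 <= m)%nat -> p + 1 <= zsum1 m lam -> p < lam 1%nat + lam 2%nat ->
  3 * p <= zsum1 (2 * m - 1) mu.
Proof.
  intros Hm Hsum Hlam12.
  rewrite zsum1_split_half by exact m_pos.
  pose proof last_column_bound as column.
  pose proof (lam_antitone_le 1 2 ltac:(lia) ltac:(lia)).
  pose proof (mu_1_saturated ltac:(lia)) as mu_1.
  pose proof (mu_2_saturated ltac:(lia) Hlam12) as mu_2.
  pose proof (lam_range 1 ltac:(lia)).
  assert (entry : forall k, (1 <= k <= m - 2)%nat -> lam 1%nat + 0 <= mu (S (S k))).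
  { intros k Hk. specialize (mu_ge 1 (S (S k)) ltac:(lia) ltac:(lia)).
    replace (1 + S (S k) - 1)%nat with (S (S k)) in mu_ge by lia.
    pose proof (lam_range (S (S k)) ltac:(lia)). lia. }
  apply zsum1_ge_const_add in entry. rewrite zsum1_const in entry.
  destruct m as [|[|m']]; [lia|lia|]. replace (S (S m') - 2)%nat with m' in entry by lia.
  rewrite (zsum1_S (S m') mu), (zsum1_S m' (fun k => mu (S k))).
  assert (lam 1%nat <= Z.of_nat m' * lam 1%nat) by nia.
  lia.
Qed.

End Truncated.

Lemma sum_mu_lower_bound (p : Z) (n : nat) : (1 <= n)%nat ->
  forall (m : nat) (lam mu : nat -> Z),
  (n + 2 <= m)%nat -> 2 * Z.of_nat m + 1 <= p ->
  (forall k, (1 <= k < m)%nat -> lam (S k) <= lam k) ->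
  lam 1%nat <= p -> 0 < lam m ->
  (forall i j, (1 <= i <= m)%nat -> (1 <= j <= m)%nat ->
     Z.min (lam i + lam j - 1) p <= mu (i + j - 1)%nat) ->
  Z.of_nat n * p + 1 <= zsum1 m lam ->
  (2 * Z.of_nat n + 1) * p <= zsum1 (2 * m - 1) mu.
Proof.
  induction n as [|n IH]; intros Hn m lam mu Hm Hp Hanti Hle Hpos Hmu Hsum; [lia|].
  assert (m_pos : (1 <= m)%nat) by lia.
  destruct (Z_le_gt_dec (2 * lam 1%nat) p) as [unsat | sat1].
  { apply (bound_unsaturated p m lam mu); auto. }
  destruct (Z_le_gt_dec (lam 1%nat + lam 2%nat) p) as [row_unsat | sat2].
  { apply (bound_first_row_unsaturated p m lam mu); auto; lia. }
  destruct n as [|n].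
  { enough (3 * p <= zsum1 (2 * m - 1) mu) by lia.
    apply (bound_first_two_saturated p m lam mu); auto; lia. }
  assert (mu_1 : p <= mu 1%nat) by (apply (mu_1_saturated p m lam mu); auto; lia).
  assert (mu_2 : p <= mu 2%nat) by (apply (mu_2_saturated p m lam mu); auto; lia).
  assert (lam_2 : 0 < lam 2%nat <= p) by (apply (lam_range p m lam); auto; lia).
  destruct m as [|m']; [lia|].
  assert (tail : (2 * Z.of_nat (S n) + 1) * p <= zsum1 (2 * m' - 1) (fun k => mu (S (S k)))).
  { apply (IH ltac:(lia) m' (fun k => lam (S k))); try lia.
    - intros k Hk. apply Hanti. lia.
    - intros i j Hi Hj. replace (S (S (i + j - 1))) with (S i + S j - 1)%nat by lia.
      apply Hmu; lia.
    - rewrite zsum1_S in Hsum. lia. }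
  replace (2 * S m' - 1)%nat with (S (S (2 * m' - 1))) by lia.
  rewrite (zsum1_S _ mu), (zsum1_S _ (fun k => mu (S k))).
  lia.
Qed.

Theorem mainTheorem7 (p : Z) (m n : nat) (lam mu : nat -> Z) :
  prime p ->
  (1 <= n)%nat ->
  (n + 2 <= m)%nat ->
  Z.of_nat m <= (p - 1) / 2 ->
  p >= lam 1%nat ->
  (forall k : nat, (1 <= k < m)%nat -> lam k >= lam (S k)) ->
  lam m > 0 ->
  zsum1 m lam >= Z.of_nat n * p + 1 ->
  (forall i j : nat, (1 <= i <= m)%nat -> (1 <= j <= m)%nat ->
     mu (i + j - 1)%nat >= Z.min (lam i + lam j - 1) p) ->
  zsum1 (2 * m - 1) mu >= (2 * Z.of_nat n + 1) * p.
Proof.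
  intros _ Hn Hm Hmp Hle Hanti Hpos Hsum Hmu.
  assert (Hp : 2 * Z.of_nat m + 1 <= p).
  { pose proof (Z.mul_div_le (p - 1) 2 ltac:(lia)). lia. }
  apply Z.le_ge, (sum_mu_lower_bound p n Hn m lam mu Hm Hp); try lia.
  - intros k Hk. specialize (Hanti k Hk). lia.
  - intros i j Hi Hj. specialize (Hmu i j Hi Hj). lia.
Qed.
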